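(* The sequence $(\mathrm{m}(d)^d)_{d\ge 1}$ has an accumulation point in the interval $[1,2]$.
   Context: For an algebraic integer $\alpha$ with conjugates $\alpha_1,\dots,\alpha_d$, $\operatorname{house}(\alpha)=\max_i|\alpha_i|$. $\mathrm{m}(d)$ denotes the minimum of $\operatorname{house}(\alpha)$ over all algebraic integers $\alpha$ of degree $d$ that are not roots of unity. *)

From Stdlib Require Import Reals QArith Qreals List Lia.
Open Scope R_scope.

Definition C : Type := (R * R)%type.
Definition C0 : C := (0, 0).
Definition C1 : C := (1, 0).
Definition Cadd (z w : C) : C := (fst z + fst w, snd z + snd w).
Definition Cmul (z w : C) : C :=
  (fst z * fst w - snd z * snd w, fst z * snd w + snd z * fst w).
Definition Cnorm (z : C) : R := sqrt (fst z * fst z + snd z * snd z).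
Fixpoint Cpow (z : C) (n : nat) : C :=
  match n with O => C1 | S k => Cmul z (Cpow z k) end.

(* Polynomials with real coefficients, as the list of coefficients
   [a_0; a_1; ...; a_n] (lowest degree first), evaluated at complex points. *)
Fixpoint peval (p : list R) (z : C) : C :=
  match p with
  | nil => C0
  | a :: q => Cadd (a, 0) (Cmul z (peval q z))
  end.
Definition is_root (p : list R) (z : C) : Prop := peval p z = C0.

Definition has_degree (p : list R) (n : nat) : Prop :=
  length p = S n /\ last p 0 <> 0.
Definition monic (p : list R) : Prop := p <> nil /\ last p 0 = 1.

Definition rat_poly (p : list R) : Prop := Forall (fun a => exists q : Q, a = Q2R q) p.
Definition int_poly (p : list R) : Prop := Forall (fun a => exists k : Z, a = IZR k) p.

Definition alg_integer (a : C) : Prop :=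
  exists p, int_poly p /\ monic p /\ is_root p a.

Definition is_minpoly (a : C) (p : list R) : Prop :=
  rat_poly p /\ monic p /\ is_root p a /\
  forall q n m, rat_poly q -> has_degree q n -> is_root q a ->
    has_degree p m -> (m <= n)%nat.

Definition alg_degree (a : C) (d : nat) : Prop :=
  exists p, is_minpoly a p /\ has_degree p d.

Definition conjugate (a b : C) : Prop :=
  exists p, is_minpoly a p /\ is_root p b.

Definition house_is (a : C) (h : R) : Prop :=
  (exists b, conjugate a b /\ Cnorm b = h) /\
  (forall b, conjugate a b -> Cnorm b <= h).

Definition root_of_unity (a : C) : Prop :=
  exists n : nat, (1 <= n)%nat /\ Cpow a n = C1.

Definition is_m (d : nat) (r : R) : Prop :=
  (exists a, alg_integer a /\ alg_degree a d /\ ~ root_of_unity a /\ house_is a r) /\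
  (forall a h, alg_integer a -> alg_degree a d -> ~ root_of_unity a ->
     house_is a h -> r <= h).

Definition accumulation_point (u : nat -> R) (L : R) : Prop :=
  forall eps, 0 < eps -> forall N : nat, exists d : nat,
    (N <= d)%nat /\ (1 <= d)%nat /\ Rabs (u d - L) < eps.

(* Let a be an algebraic integer of degree d >= 2.  Its minimal polynomial is
   monic with integer coefficients (Gauss) and, being irreducible of degree at
   least 2, has a nonzero constant term; that term is, up to sign, the product
   of the d conjugates of a, whence house(a)^d >= 1.  On the other hand
   2^(1/d) is a root of the Eisenstein polynomial X^d - 2, so m(d) <= 2^(1/d).
   An algebraic integer of degree d with house h has minimal polynomial
   coefficients bounded by (1 + h)^d, so only finitely many houses lie below
   2^(1/d) and m(d) is attained.  Thus m(d)^d lies in [1, 2] for d >= 2, and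
   Bolzano-Weierstrass gives the accumulation point. *)
From Pilot Require Import Defs.
From Stdlib Require Import Reals QArith Qreals Classical Epsilon Lra Lia.
From HB Require Import structures.
From mathcomp Require Import all_boot all_order all_algebra.
From mathcomp Require Import Rstruct complex zify.
Import Order.TTheory GRing.Theory Num.Theory.

Set Implicit Arguments.
Unset Strict Implicit.
Local Open Scope ring_scope.

Local Notation emb := (real_complex R).
Local Notation normc := (@Normc.normc R).

Definition cplx (z : Defs.C) : R[i] := Complex (fst z) (snd z).

Definition poly_of_list (p : list R) : {poly R[i]} := map_poly emb (Poly p).

Lemma cplx_add z w : cplx (Cadd z w) = cplx z + cplx w.
Proof. by case: z => a b; case: w => c d. Qed.

Lemma cplx_mul z w : cplx (Cmul z w) = cplx z * cplx w.
Proof. by case: z => a b; case: w => c d. Qed.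

Lemma cplx_pow z n : cplx (Cpow z n) = cplx z ^+ n.
Proof. by elim: n => [|n IH] //=; rewrite cplx_mul IH exprS. Qed.

Lemma cplx_real a : cplx (a, R0) = emb a.
Proof. by []. Qed.

Lemma cplx_inj : injective cplx.
Proof. by case=> a b [c d] [-> ->]. Qed.

Lemma cplx_surj (x : R[i]) : exists z, cplx z = x.
Proof. by case: x => a b; exists (a, b). Qed.

Lemma CnormE z : Cnorm z = normc (cplx z).
Proof. by case: z => a b; rewrite /Cnorm /= RsqrtE !expr2. Qed.

Lemma cplx_peval p z : cplx (peval p z) = (poly_of_list p).[cplx z].
Proof.
rewrite /poly_of_list map_Poly_id0 ?rmorph0 // horner_Poly.
elim: p => [|a q IH] //=.
by rewrite cplx_add cplx_mul IH cplx_real mulrC addrC.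
Qed.

Lemma is_rootE p z : Defs.is_root p z <-> root (poly_of_list p) (cplx z).
Proof.
rewrite /Defs.is_root; split=> [H|/eqP H].
  by apply/eqP; rewrite -cplx_peval H.
by apply: cplx_inj; rewrite cplx_peval H.
Qed.

Lemma normc_ge0 (z : R[i]) : 0 <= normc z.
Proof. by case: z => a b; rewrite /Normc.normc sqrtr_ge0. Qed.

Lemma normc_real (x : R) : normc (emb x) = `|x|.
Proof. by rewrite /Normc.normc /= expr0n /= addr0 sqrtr_sqr. Qed.

Lemma normcX (z : R[i]) n : normc (z ^+ n) = normc z ^+ n.
Proof.
elim: n => [|n IH]; first by rewrite !expr0 Normc.normc1.
by rewrite !exprS Normc.normcM IH.
Qed.

Lemma IZR_intr (z : Z) : exists k : int, IZR z = k%:~R.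
Proof.
case: z => [|p|p]; first by exists 0.
  by exists (Posz (nat_of_pos p)); rewrite IZRposE INRE.
exists (- Posz (nat_of_pos p)).
have -> : Z.neg p = Z.opp (Z.pos p) by [].
by rewrite opp_IZR IZRposE INRE mulrNz.
Qed.

Lemma intr_IZR (k : int) : exists z : Z, k%:~R = IZR z :> R.
Proof.
case: k => n.
  by exists (Z.of_nat n); rewrite -INR_IZR_INZ INRE.
exists (Z.opp (Z.of_nat n.+1)).
by rewrite opp_IZR -INR_IZR_INZ INRE NegzE mulrNz.
Qed.

Lemma Q2R_ratr (q : Q) : exists r : rat, Q2R q = ratr r.
Proof.
case: q => n d; rewrite /Q2R /=.
have [kn ->] := IZR_intr n; have [kd ->] := IZR_intr (Z.pos d).
by exists (kn%:~R / kd%:~R); rewrite rmorphM /= fmorphV /= !ratr_int.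
Qed.

Lemma Q2R_inject_Z z : Q2R (inject_Z z) = IZR z.
Proof. by rewrite /Q2R /= Rinv_1 Rmult_1_r. Qed.

Lemma ratr_Q2R (r : rat) : exists q : Q, ratr r = Q2R q.
Proof.
have [zn Hn] := intr_IZR (numq r); have [zd Hd] := intr_IZR (denq r).
have zd_neq0 : IZR zd <> R0.
  by rewrite -Hd => /eqP; rewrite intr_eq0 (negbTE (denq_neq0 r)).
have zd_Qneq0 : ~ Qeq (inject_Z zd) (Qmake Z0 xH).
  move=> /Qeq_eqR; rewrite Q2R_inject_Z => H.
  by apply: zd_neq0; rewrite H /Q2R /= Rmult_0_l.
exists (Qdiv (inject_Z zn) (inject_Z zd)).
rewrite Q2R_div // !Q2R_inject_Z -Hn -Hd.
by rewrite -{1}[r]divq_num_den rmorphM /= fmorphV /= !ratr_int.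
Qed.

Lemma lengthE {T} (l : list T) : List.length l = size l.
Proof. by elim: l => //= a l ->. Qed.

Lemma lastE (p : list R) d : List.last p d = seq.last d p.
Proof.
case: p => [|a q] //=.
elim: q a => [|b q IH] a //.
by rewrite /= -IH; case: q {IH}.
Qed.

Lemma rat_polyP p : rat_poly p -> exists rs : seq rat, p = map ratr rs.
Proof.
elim=> [|x l [q ->] _ [rs ->]]; first by exists [::].
by have [r ->] := Q2R_ratr q; exists (r :: rs).
Qed.

Lemma int_polyP p : int_poly p -> exists ks : seq int, p = map intr ks.
Proof.
elim=> [|x l [z ->] _ [ks ->]]; first by exists [::].
by have [k ->] := IZR_intr z; exists (k :: ks).
Qed.

Definition realP (P : {poly rat}) : {poly R} := map_poly ratr P.
Definition cplxP (P : {poly rat}) : {poly R[i]} := map_poly emb (realP P).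

Lemma size_realP P : size (realP P) = size P.
Proof. exact: size_map_poly. Qed.

Lemma size_cplxP P : size (cplxP P) = size P.
Proof. by rewrite /cplxP size_map_poly size_realP. Qed.

Lemma cplxPM A B : cplxP (A * B) = cplxP A * cplxP B.
Proof. by rewrite /cplxP /realP !rmorphM. Qed.

Lemma cplxPD A B : cplxP (A + B) = cplxP A + cplxP B.
Proof. by rewrite /cplxP /realP !rmorphD. Qed.

Lemma coef_cplxP P i : (cplxP P)`_i = emb (ratr P`_i).
Proof. by rewrite /cplxP /realP !coef_map. Qed.

Lemma realP_int (F : {poly int}) : realP (map_poly intr F) = map_poly intr F.
Proof.
by rewrite /realP -map_poly_comp; apply: eq_map_poly => x /=; exact: ratr_int.
Qed.

Lemma polyseq_realP P : polyseq (realP P) = map ratr (polyseq P).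
Proof.
have [->|P0] := eqVneq P 0; first by rewrite /realP map_poly0 !polyseq0.
rewrite /realP map_polyE (PolyK (c:=0)) //.
have := last_map (ratr : rat -> R) P 0; rewrite rmorph0 => ->.
by rewrite -nth_last -lead_coefE fmorph_eq0 lead_coef_eq0.
Qed.

Lemma last_realP Q : seq.last 0 (polyseq (realP Q)) = ratr (lead_coef Q).
Proof. by rewrite -nth_last -lead_coefE lead_coef_map. Qed.

Lemma rat_poly_realP P : rat_poly (polyseq (realP P)).
Proof.
rewrite polyseq_realP; elim: (polyseq P) => [|r rs IH] /=; first by constructor.
by constructor=> //; have [q ->] := ratr_Q2R r; exists q.
Qed.

Lemma poly_of_list_realP P : poly_of_list (polyseq (realP P)) = cplxP P.
Proof. by rewrite /poly_of_list polyseqK. Qed.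

Lemma rat_poly_Poly p : rat_poly p -> exists P, Poly p = realP P.
Proof.
move=> /rat_polyP [rs ->]; exists (Poly rs).
by rewrite /realP map_Poly_id0 ?rmorph0.
Qed.

Lemma has_degree_realP Q : Q != 0 -> has_degree (polyseq (realP Q)) (size Q).-1.
Proof.
move=> Q0; split.
  by rewrite lengthE size_realP prednK // size_poly_gt0.
by rewrite lastE last_realP; apply/eqP; rewrite fmorph_eq0 lead_coef_eq0.
Qed.

Lemma polyseq_int_realP (F : {poly int}) :
  polyseq (map_poly intr F : {poly R}) = map intr (polyseq F).
Proof.
have [->|F0] := eqVneq F 0; first by rewrite map_poly0 !polyseq0.
rewrite map_polyE (PolyK (c:=0)) //.
have := last_map (intr : int -> R) F 0; rewrite mulr0z => ->.
by rewrite -nth_last -lead_coefE intr_eq0 lead_coef_eq0.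
Qed.

Lemma int_poly_intr (F : {poly int}) :
  int_poly (polyseq (map_poly intr F : {poly R})).
Proof.
rewrite polyseq_int_realP; elim: (polyseq F) => [|k ks IH] /=; first by constructor.
by constructor=> //; have [z ->] := intr_IZR k; exists z.
Qed.

Lemma split_cplxP P : P \is monic ->
  exists rs : seq R[i], cplxP P = \prod_(z <- rs) ('X - z%:P) /\ size rs = (size P).-1.
Proof.
move=> mP; have mK : cplxP P \is monic by rewrite /cplxP /realP !monic_map.
case: (closed_field_poly_normal (cplxP P)) => rs E.
rewrite (monicP mK) scale1r in E; exists rs; split=> //.
by rewrite -size_cplxP E size_prod_XsubC.
Qed.

(** * Minimal polynomials over Q *)

(* Minimality is by size only: P need not be monic. *)
Definition minpolyQ (a : R[i]) (P : {poly rat}) :=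
  [/\ P != 0, root (cplxP P) a &
      forall Q, Q != 0 -> root (cplxP Q) a -> (size P <= size Q)%N].

Lemma minpolyQ_exists (a : R[i]) Q : Q != 0 -> root (cplxP Q) a ->
  exists M, minpolyQ a M.
Proof.
move: {2}(size Q) (leqnn (size Q)) => n; elim: n Q => [|n IH] Q.
  by rewrite leqn0 size_poly_eq0 => /eqP ->; rewrite eqxx.
move=> sQ Q0 rQ.
case: (classic (exists Q', [/\ Q' != 0, root (cplxP Q') a & (size Q' < size Q)%N])).
  case=> Q' [Q'0 rQ' sQ']; apply: (IH Q') => //.
  by rewrite -ltnS (leq_trans sQ').
move=> Hn; exists Q; split=> // Q' Q'0 rQ'.
by rewrite leqNgt; apply/negP => H; apply: Hn; exists Q'.
Qed.

Lemma minpolyQ_dvd a P Q : minpolyQ a P -> root (cplxP Q) a -> P %| Q.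
Proof.
move=> [P0 rP Pmin] rQ.
apply/modp_eq0P; apply/eqP; apply: contraT => r0.
have : root (cplxP (Q %% P)) a.
  move: rQ; rewrite {1}(divp_eq Q P) cplxPD cplxPM /root hornerD hornerM.
  by rewrite (eqP rP) mulr0 add0r.
by move=> /(Pmin _ r0); rewrite leqNgt ltn_modp P0.
Qed.

Lemma minpolyQ_uniq a P1 P2 : P1 \is monic -> P2 \is monic ->
  minpolyQ a P1 -> minpolyQ a P2 -> P1 = P2.
Proof.
move=> m1 m2 h1 h2.
have d12 := minpolyQ_dvd h1 (let: And3 _ r _ := h2 in r).
have d21 := minpolyQ_dvd h2 (let: And3 _ r _ := h1 in r).
by apply/eqP; rewrite -eqp_monic // /eqp d12 d21.
Qed.

Lemma minpolyQ_coef0_neq0 a P : minpolyQ a P -> (2 < size P)%N -> P`_0 != 0.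
Proof.
move=> [P0 rP Pmin] sP2; apply/negP => /eqP P00.
have : root P 0 by rewrite /root horner_coef0 P00.
rewrite root_factor_theorem subr0 => /dvdpP [q Eq].
have q0 : q != 0 by apply: contraNneq P0 => q0; rewrite Eq q0 mul0r.
have sP : size P = (size q).+1 by rewrite Eq size_mulX.
move: rP; rewrite Eq cplxPM /cplxP /realP !map_polyX /root hornerM hornerX mulf_eq0.
case/orP => [rq | /eqP a0]; first by have := Pmin q q0 rq; rewrite sP ltnn.
have X0 : ('X : {poly rat}) != 0 by rewrite polyX_eq0.
have : root (cplxP 'X) a by rewrite /cplxP /realP !map_polyX /root hornerX a0.
by move=> /(Pmin _ X0); rewrite size_polyX => H; lia.
Qed.

(* Gauss's lemma: the minimal polynomial of an algebraic integer divides a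
   monic integer polynomial, so its monic rational normalisation is integral. *)
Lemma minpolyQ_int_coef a P : alg_integer a -> P \is monic -> minpolyQ (cplx a) P ->
  forall i, exists k : int, P`_i = k%:~R.
Proof.
case=> [f [fi [[fn fl] fr]]] mP aP.
have [ks Ef] := int_polyP fi.
pose F : {poly int} := Poly ks.
have lks : seq.last 0 ks = 1.
  have := last_map (intr : int -> R) ks 0; rewrite mulr0z -Ef -lastE fl.
  by move=> /esym H; apply: (@intr_inj R); rewrite H.
have sF : polyseq F = ks by apply: (PolyK (c:=0)); rewrite lks oner_neq0.
have lF : lead_coef F = 1 by rewrite lead_coefE sF nth_last lks.
have rF : root (cplxP (map_poly intr F)) (cplx a).
  rewrite /cplxP realP_int.
  have -> : map_poly intr F = Poly f :> {poly R}.
    by rewrite Ef map_Poly_id0 // mulr0z.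
  exact/is_rootE.
case/dvdpP_rat_int: (minpolyQ_dvd aP rF) => p1 [c c0 EP] [r Er].
have u1 : lead_coef p1 \is a intUnitRing.unitz.
  by apply: (@intUnitRing.unitzPl _ (lead_coef r)); rewrite mulrC -lead_coefM -Er.
have uu : (lead_coef p1)%:~R * (lead_coef p1)%:~R = 1 :> rat.
  by move: u1; rewrite qualifE => /orP [] /eqP ->.
have lP : c * (lead_coef p1)%:~R = 1.
  by have := monicP mP; rewrite EP lead_coefZ (lead_coef_map_inj (@intr_inj _)).
have Ec : c = (lead_coef p1)%:~R.
  have := congr1 (fun x => x * (lead_coef p1)%:~R) lP.
  by rewrite /= -mulrA uu mulr1 mul1r.
move=> i; exists (lead_coef p1 * p1`_i).
by rewrite EP coefZ coef_map_id0 // Ec intrM.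
Qed.

Lemma is_minpoly_minpolyQ a p : is_minpoly a p ->
  exists P, [/\ P \is monic, minpolyQ (cplx a) P & polyseq (realP P) = p].
Proof.
case=> [rp [[pn lp] [rt pmin]]].
have [P EP] := rat_poly_Poly rp.
have lp' : seq.last 0 p = 1 by rewrite -lastE.
have Pp : polyseq (Poly p) = p by apply: (PolyK (c:=0)); rewrite lp' oner_neq0.
have sp : polyseq (realP P) = p by rewrite -EP Pp.
have mP : P \is monic.
  have H := last_realP P; rewrite sp lp' in H.
  apply/monicP; apply: (fmorph_inj (ratr : {rmorphism rat -> R})).
  by rewrite rmorph1 /= -H.
have P0 : P != 0 by apply: monic_neq0.
exists P; split=> //; split=> //.
  by rewrite -poly_of_list_realP sp; apply/is_rootE.
move=> Q Q0 rQ.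
have rQ' : Defs.is_root (polyseq (realP Q)) a by apply/is_rootE; rewrite poly_of_list_realP.
have := pmin _ _ (size P).-1 (rat_poly_realP Q) (has_degree_realP Q0) rQ'.
rewrite -sp => /(_ (has_degree_realP P0)) /ssrnat.leP.
have : (0 < size P)%N by rewrite size_poly_gt0.
have : (0 < size Q)%N by rewrite size_poly_gt0.
lia.
Qed.

Lemma minpolyQ_is_minpoly a P : P \is monic -> minpolyQ (cplx a) P ->
  is_minpoly a (polyseq (realP P)).
Proof.
move=> mP [P0 rP Pmin].
split; first exact: rat_poly_realP.
split.
  split; first by case: (has_degree_realP P0) => + _; case: (polyseq (realP P)).
  by rewrite lastE last_realP (monicP mP) rmorph1.
split; first by apply/is_rootE; rewrite poly_of_list_realP.
move=> q n m rq [hq1 hq2] rtq [hp1 _].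
have [Q EQ] := rat_poly_Poly rq.
have Pq : polyseq (Poly q) = q.
  by apply: (PolyK (c:=0)); apply/eqP; rewrite -lastE.
have sq : polyseq (realP Q) = q by rewrite -EQ Pq.
have sQ : size Q = n.+1 by rewrite -size_realP sq -lengthE.
have Q0 : Q != 0 by rewrite -size_poly_gt0 sQ.
have rQ : root (cplxP Q) (cplx a).
  by rewrite -poly_of_list_realP sq; apply/is_rootE.
have := Pmin Q Q0 rQ; rewrite sQ -size_realP.
by move: hp1; rewrite lengthE => -> /ssrnat.leP; lia.
Qed.

Lemma is_minpoly_uniq a p1 p2 : is_minpoly a p1 -> is_minpoly a p2 -> p1 = p2.
Proof.
move=> /is_minpoly_minpolyQ [P1 [m1 h1 <-]] /is_minpoly_minpolyQ [P2 [m2 h2 <-]].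
by rewrite (minpolyQ_uniq m1 m2 h1 h2).
Qed.

Lemma conjugateE a p b : is_minpoly a p -> conjugate a b <-> Defs.is_root p b.
Proof.
move=> hp; split; last by exists p.
by case=> p' [hp' rb]; rewrite (is_minpoly_uniq hp hp').
Qed.

Lemma alg_degree_roots a d : alg_degree a d -> exists P (rs : seq R[i]),
  [/\ P \is monic, minpolyQ (cplx a) P, is_minpoly a (polyseq (realP P)),
      cplxP P = \prod_(z <- rs) ('X - z%:P) & size rs = d].
Proof.
case=> p [hp [lp _]].
have [P [mP aP sp]] := is_minpoly_minpolyQ hp.
have [rs [E srs]] := split_cplxP mP.
exists P, rs; split=> //; first by rewrite sp.
by rewrite srs -size_realP sp -lengthE lp.
Qed.

Section ConjugateRoots.
Variables (a : Defs.C) (P : {poly rat}) (rs : seq R[i]).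
Hypotheses (aP : is_minpoly a (polyseq (realP P)))
           (Prs : cplxP P = \prod_(z <- rs) ('X - z%:P)).

Lemma conjugate_roots b : conjugate a b <-> cplx b \in rs.
Proof. by rewrite (conjugateE _ aP) is_rootE poly_of_list_realP Prs root_prod_XsubC. Qed.

Lemma house_is_roots h : house_is a h ->
  (forall z, z \in rs -> normc z <= h) /\ exists2 z, z \in rs & normc z = h.
Proof.
move=> [[b [cb nb]] hub]; split.
  move=> z zr; have [b' Eb'] := cplx_surj z.
  have := hub b'; rewrite CnormE Eb' => /(_ _)/RleP; apply.
  by apply/conjugate_roots; rewrite Eb'.
by exists (cplx b); [apply/conjugate_roots | rewrite -CnormE].
Qed.

Lemma roots_house_is h : (forall z, z \in rs -> normc z <= h) ->
  (exists2 z, z \in rs & normc z = h) -> house_is a h.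
Proof.
move=> rs_le [z zr nz]; split.
  have [b Eb] := cplx_surj z; exists b; split; last by rewrite CnormE Eb.
  by apply/conjugate_roots; rewrite Eb.
by move=> b /conjugate_roots /rs_le; rewrite CnormE => /RleP.
Qed.

End ConjugateRoots.

(** * Bounds from the conjugates *)

Lemma house_is_uniq a h h' : house_is a h -> house_is a h' -> h = h'.
Proof.
move=> [[b [cb <-]] hub] [[b' [cb' <-]] hub'].
by apply: Rle_antisym; [apply: hub' | apply: hub].
Qed.

Lemma house_is_ge0 a h : house_is a h -> Rle 0 h.
Proof. by move=> [[b [_ <-]] _]; apply: sqrt_pos. Qed.

Lemma normc_coef_prod_XsubC (rs : seq R[i]) (h : R) : 0 <= h ->
  (forall z, z \in rs -> normc z <= h) ->
  forall k, normc (\prod_(z <- rs) ('X - z%:P))`_k <= (1 + h) ^+ size rs.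
Proof.
move=> h0; elim: rs => [|z rs IH] rs_le k.
  rewrite big_nil coefC; case: (k == 0%N); first by rewrite expr0 Normc.normc1.
  by rewrite Normc.normc0 expr0 ler01.
have IH' := IH (fun w hw => rs_le w ltac:(by rewrite inE hw orbT)).
have hz : normc z <= h by apply: rs_le; rewrite mem_head.
rewrite big_cons mulrBl coefB coefXM coefCM exprS.
apply: le_trans (le_normcD _ (- _)) _; rewrite normcN mulrDl mul1r lerD //.
  by case: (k == 0%N); rewrite ?Normc.normc0 ?exprn_ge0 ?addr_ge0 ?ler01.
by rewrite Normc.normcM; apply: ler_pM => //; exact: normc_ge0.
Qed.

Lemma normc_coef0_prod_XsubC (rs : seq R[i]) (h : R) : 0 <= h ->
  (forall z, z \in rs -> normc z <= h) ->
  normc (\prod_(z <- rs) ('X - z%:P))`_0 <= h ^+ size rs.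
Proof.
move=> h0; elim: rs => [|z rs IH] rs_le.
  by rewrite big_nil coefC eqxx expr0 Normc.normc1.
have IH' := IH (fun w hw => rs_le w ltac:(by rewrite inE hw orbT)).
have hz : normc z <= h by apply: rs_le; rewrite mem_head.
rewrite big_cons mulrBl coefB coefXM coefCM eqxx exprS sub0r normcN.
by rewrite Normc.normcM; apply: ler_pM => //; exact: normc_ge0.
Qed.

Lemma house_pow_ge1 a d h : (1 < d)%N -> alg_integer a -> alg_degree a d ->
  house_is a h -> 1 <= h ^+ d.
Proof.
move=> d1 ai ad hh.
have [P [rs [mP aP pP Prs srs]]] := alg_degree_roots ad.
have [rs_le _] := house_is_roots pP Prs hh.
have /RleP h0 := house_is_ge0 hh.
have c0 : P`_0 != 0.
  by apply: (minpolyQ_coef0_neq0 aP); rewrite -size_cplxP Prs size_prod_XsubC srs.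
have [k Ek] := minpolyQ_int_coef ai mP aP 0.
have := normc_coef0_prod_XsubC h0 rs_le.
rewrite -Prs coef_cplxP normc_real srs Ek ratr_int; apply: le_trans.
rewrite -intr_norm ler1z -gtz0_ge1 normr_gt0.
by apply: contraNneq c0 => k0; rewrite Ek k0.
Qed.

Lemma ratr_seq_IZR (s : seq rat) (B : R) :
  (forall i, (i < size s)%N -> exists k : int, s`_i = k%:~R /\ Rabs k%:~R <= B) ->
  exists zs : list Z, [/\ map ratr s = map IZR zs,
    List.Forall (fun z => Rabs (IZR z) <= B) zs & List.length zs = size s].
Proof.
elim: s => [|a s IH] Hs; first by exists nil.
have [zs [E1 E2 E3]] := IH (fun i hi => Hs i.+1 hi).
have [k [/= Ek Bk]] := Hs 0%N isT.
have [z Ez] := intr_IZR k.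
exists (z :: zs); split; first by rewrite /= E1 -Ez Ek ratr_int.
  by constructor=> //; rewrite -Ez.
by rewrite /= E3.
Qed.

Lemma minpoly_coef_bound a d h : alg_integer a -> alg_degree a d -> house_is a h ->
  exists zs : list Z, [/\ is_minpoly a (map IZR zs), List.length zs = d.+1 &
    List.Forall (fun z => Rabs (IZR z) <= (1 + h) ^+ d) zs].
Proof.
move=> ai ad hh.
have [P [rs [mP aP pP Prs srs]]] := alg_degree_roots ad.
have [rs_le _] := house_is_roots pP Prs hh.
have /RleP h0 := house_is_ge0 hh.
have [|zs [Ezs Bzs lzs]] := @ratr_seq_IZR (polyseq P) ((1 + h) ^+ d).
  move=> i _; have [k Ek] := minpolyQ_int_coef ai mP aP i; exists k; split=> //.
  have := normc_coef_prod_XsubC h0 rs_le i.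
  by rewrite -Prs coef_cplxP normc_real srs Ek ratr_int RabsE.
exists zs; split=> //; first by rewrite -Ezs -polyseq_realP.
by rewrite lzs -size_cplxP Prs size_prod_XsubC srs.
Qed.

(** * The polynomial X^d - 2 *)

Definition pow_sub2_int (d : nat) : {poly int} := 'X^d - 2%:P.
Definition pow_sub2 (d : nat) : {poly rat} := map_poly intr (pow_sub2_int d).
Definition root2 (d : nat) : R := Rpower 2 (/ INR d).

Section Root2.
Variable d : nat.
Hypothesis d_gt0 : (0 < d)%N.

Lemma root2_gt0 : Rlt R0 (root2 d).
Proof. exact: exp_pos. Qed.

Lemma root2_pow : root2 d ^+ d = 2.
Proof.
have INRd : Rlt R0 (INR d) by apply: lt_0_INR; apply/ssrnat.ltP.
rewrite -RpowE -Rpower_pow; last exact: root2_gt0.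
rewrite /root2 Rpower_mult Rinv_l; last by apply: not_eq_sym; apply: Rlt_not_eq.
by rewrite Rpower_1 //; apply: IZR_lt.
Qed.

Lemma root2_gt1 : 1 < root2 d.
Proof.
have : Rlt (Rpower 2 0) (root2 d).
  apply: Rpower_lt; first by apply: IZR_lt.
  by apply: Rinv_0_lt_compat; apply: lt_0_INR; apply/ssrnat.ltP.
by rewrite Rpower_O => [/RltP|]; last by apply: IZR_lt.
Qed.

Lemma monic_pow_sub2 : pow_sub2 d \is monic.
Proof. by rewrite /pow_sub2 monic_map // monicXnsubC. Qed.

Lemma size_pow_sub2 : size (pow_sub2 d) = d.+1.
Proof. by rewrite /pow_sub2 size_map_inj_poly ?size_XnsubC //; apply: intr_inj. Qed.

Lemma root_pow_sub2 (z : R[i]) : root (cplxP (pow_sub2 d)) z = (z ^+ d == 2).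
Proof.
rewrite /cplxP /pow_sub2 realP_int /pow_sub2_int !rmorphB /= !map_polyXn !map_polyC.
by rewrite /= rmorph_int /root !hornerE subr_eq0.
Qed.

Lemma irreducible_pow_sub2 : irreducible_poly (pow_sub2 d).
Proof.
apply/irreducible_rat_int; apply: (@eisenstein_crit 2) => //.
- by rewrite /pow_sub2_int size_XnsubC //; case: (d) d_gt0.
- by rewrite (monicP (monicXnsubC _ _)).
- by rewrite /pow_sub2_int coefB coefXn coefC; case: (d) d_gt0.
move=> i; rewrite /pow_sub2_int size_XnsubC //= => hi.
by rewrite coefB coefXn coefC (ltn_eqF hi) sub0r; case: (i == 0%N).
Qed.

Lemma minpolyQ_root2 : minpolyQ (emb (root2 d)) (pow_sub2 d).
Proof.
have X0 : pow_sub2 d != 0 by apply: monic_neq0; exact: monic_pow_sub2.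
have rX : root (cplxP (pow_sub2 d)) (emb (root2 d)).
  by rewrite root_pow_sub2 -rmorphXn root2_pow rmorph_nat.
split=> // Q Q0 rQ.
have [M aM] := minpolyQ_exists Q0 rQ.
have sM : size M != 1%N.
  apply/negP => /size_poly1P [c c0 Mc]; case: aM => _ + _.
  by rewrite Mc /cplxP /realP !map_polyC /root hornerC !fmorph_eq0 (negbTE c0).
have := irreducible_pow_sub2.2 M sM (minpolyQ_dvd aM rX) => /eqp_size <-.
by case: aM => _ _; apply.
Qed.

(* Every root of X^d - 2 has modulus 2^(1/d), the real one included. *)
Lemma house_root2 : house_is (root2 d, R0) (root2 d).
Proof.
have aP := minpolyQ_is_minpoly (a := (root2 d, R0)) monic_pow_sub2 minpolyQ_root2.
have [rs [Prs _]] := split_cplxP monic_pow_sub2.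
have root2_ge0 : 0 <= root2 d by apply/ltW/RltP; exact: root2_gt0.
apply: (roots_house_is aP Prs).
  move=> z; rewrite -root_prod_XsubC -Prs root_pow_sub2 => /eqP zd.
  have : normc z ^+ d == root2 d ^+ d.
    by rewrite -normcX zd root2_pow -(rmorph_nat emb) normc_real ger0_norm.
  by rewrite eqrXn2 // ?normc_ge0 // => /eqP ->.
exists (emb (root2 d)); last by rewrite normc_real ger0_norm.
by rewrite -root_prod_XsubC -Prs; case: minpolyQ_root2.
Qed.

End Root2.

Definition admissible_house (d : nat) (h : R) : Prop :=
  exists a, alg_integer a /\ alg_degree a d /\ ~ Defs.root_of_unity a /\ house_is a h.

Lemma admissible_root2 d : (0 < d)%N -> admissible_house d (root2 d).
Proof.
move=> d_gt0; exists (root2 d, R0).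
have aP := minpolyQ_is_minpoly (a := (root2 d, R0)) (monic_pow_sub2 d_gt0)
  (minpolyQ_root2 d_gt0).
split; [|split; [|split; last exact: house_root2]].
- exists (polyseq (realP (pow_sub2 d))); split.
    by rewrite /pow_sub2 realP_int; apply: int_poly_intr.
  by case: aP => _ [? []].
- exists (polyseq (realP (pow_sub2 d))); split=> //.
  have := has_degree_realP (monic_neq0 (monic_pow_sub2 d_gt0)).
  by rewrite size_pow_sub2.
- case=> n [n1 /(congr1 cplx)]; rewrite cplx_pow cplx_real (_ : cplx Defs.C1 = 1) //.
  move=> /(congr1 normc); rewrite normcX normc_real ger0_norm; last first.
    by apply/ltW/RltP; exact: root2_gt0.
  rewrite Normc.normc1 => E; have := exprn_egt1 n (root2_gt1 d_gt0).
  by rewrite E ltxx => /esym /negbFE /eqP n0; move: n1; rewrite n0 => /ssrnat.leP.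
Qed.

Local Close Scope ring_scope.
Local Open Scope R_scope.

(** * Attainment of m(d) and the accumulation point *)

Lemma list_min (l : list R) (T : R -> Prop) :
  (exists x, T x) -> (forall x, T x -> List.In x l) ->
  exists m, T m /\ forall x, T x -> m <= x.
Proof.
elim: l T => [|a l IH] T [x Tx] Tl; first by case: (Tl x Tx).
case: (classic (exists y, T y /\ y <> a)) => [Ta'|Ta'].
- have Tl' : forall z, T z /\ z <> a -> List.In z l.
    by move=> z [Tz za]; case: (Tl z Tz) => // az; case: za.
  have [m [[Tm ma] Hm]] := IH (fun z => T z /\ z <> a) Ta' Tl'.
  have Hm' : forall z, T z -> z <> a -> m <= z by move=> z Tz za; apply: Hm.
  case: (classic (T a)) => Ta; last first.
    by exists m; split=> // z Tz; apply: Hm' => // za; apply: Ta; rewrite -za.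
  case: (Rle_dec a m) => am.
    exists a; split=> // z Tz; case: (classic (z = a)) => [->|za]; first lra.
    by apply: Rle_trans am (Hm' z Tz za).
  exists m; split=> // z Tz; case: (classic (z = a)) => [->|za]; first lra.
  exact: Hm' z Tz za.
- have Ta : forall z, T z -> z = a.
    by move=> z Tz; apply: NNPP => za; apply: Ta'; exists z.
  exists a; split; first by rewrite -(Ta x Tx).
  by move=> z /Ta ->; apply: Rle_refl.
Qed.

Definition Zrange (B : nat) : list Z :=
  List.map (fun k => Z.sub (Z.of_nat k) (Z.of_nat B)) (List.seq 0 (2 * B + 1)%nat).

Lemma in_Zrange B z : Z.le (Z.abs z) (Z.of_nat B) -> List.In z (Zrange B).
Proof.
move=> H; apply/List.in_map_iff; exists (Z.to_nat (Z.add z (Z.of_nat B))).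
by split; [lia | apply/List.in_seq; lia].
Qed.

Fixpoint Ztuples (n B : nat) : list (list Z) :=
  match n with
  | O => cons nil nil
  | S n => List.flat_map (fun z => List.map (cons z) (Ztuples n B)) (Zrange B)
  end.

Lemma in_Ztuples B zs : List.Forall (fun z => Z.le (Z.abs z) (Z.of_nat B)) zs ->
  List.In zs (Ztuples (List.length zs) B).
Proof.
elim=> [|z zs0 Hz _ IH] /=; first by left.
apply/List.in_flat_map; exists z; split; first exact: in_Zrange.
by apply/List.in_map_iff; exists zs0.
Qed.

(* Well defined since the house only depends on the minimal polynomial. *)
Definition house_of_minpoly (p : list R) : R :=
  epsilon (inhabits R0) (fun h => exists a, is_minpoly a p /\ house_is a h).

Lemma house_of_minpolyE a p h : is_minpoly a p -> house_is a h ->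
  house_of_minpoly p = h.
Proof.
move=> ap ah.
have [a' [a'p a'h]] : exists a', is_minpoly a' p /\ house_is a' (house_of_minpoly p).
  by apply: (epsilon_spec (inhabits R0)
    (fun h => exists a, is_minpoly a p /\ house_is a h)); exists h, a.
apply: (house_is_uniq (a := a)) _ ah; case: a'h => [[b [cb nb]] hub]; split.
  by exists b; split=> //; apply/(conjugateE _ ap)/(conjugateE _ a'p).
by move=> c /(conjugateE _ ap) /(conjugateE _ a'p); apply: hub.
Qed.

(* Houses below 2^(1/d) come from the finitely many integer polynomials of
   degree d with coefficients bounded by (1 + 2^(1/d))^d. *)
Lemma is_m_exists d : (0 < d)%N -> exists m, is_m d m.
Proof.
move=> d_gt0.
have [B HB] := INR_unbounded ((1 + root2 d) ^ d).
pose T h := admissible_house d h /\ h <= root2 d.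
pose l := List.map house_of_minpoly (List.map (List.map IZR) (Ztuples d.+1 B)).
have Tl : forall h, T h -> List.In h l.
  move=> h [[a [ai [ad [_ ah]]]] hle].
  have [zs [azs lzs Bzs]] := minpoly_coef_bound ai ad ah.
  have h0 := house_is_ge0 ah.
  apply/List.in_map_iff; exists (List.map IZR zs).
  split; first exact: house_of_minpolyE azs ah.
  apply/List.in_map; rewrite -lzs; apply: in_Ztuples.
  apply: List.Forall_impl Bzs => z /RleP Hz.
  apply: le_IZR; rewrite abs_IZR -INR_IZR_INZ.
  apply: Rle_trans Hz _; rewrite -RpowE; left.
  apply: Rle_lt_trans HB; apply: pow_incr.
  by change (0 <= 1 + h /\ 1 + h <= 1 + root2 d); lra.
have [m [[Sm mle] mmin]] := list_min (ex_intro _ (root2 d) (conj (admissible_root2 d_gt0) (Rle_refl _))) Tl.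
exists m; split=> // a h ai ad an ah; case: (Rle_dec h (root2 d)) => hle; last lra.
by apply: mmin; split=> //; exists a.
Qed.

Lemma is_m_bounds d m : (1 < d)%N -> is_m d m -> 1 <= m ^ d <= 2.
Proof.
move=> d_gt1 [[a [ai [ad [an am]]]] mmin].
have d_gt0 : (0 < d)%N by apply: ltnW.
split; first by rewrite RpowE; apply/RleP; apply: house_pow_ge1 am.
have [b [bi [bd [bn bh]]]] := admissible_root2 d_gt0.
apply: Rle_trans (pow_incr _ _ d (conj (house_is_ge0 am) (mmin _ _ bi bd bn bh))) _.
by rewrite RpowE root2_pow //; apply: Rle_refl.
Qed.

Lemma accumulation_point_in_interval (u : nat -> R) (a b : R) (n0 : nat) :
  (forall n, (n0 <= n)%nat -> a <= u n <= b) ->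
  exists L, a <= L <= b /\ accumulation_point u L.
Proof.
move=> ab; pose v n := u (n + n0 + 1)%nat.
have vab : forall n, a <= v n <= b by move=> n; apply: ab; apply/ssrnat.leP; lia.
have [L HL] := Bolzano_Weierstrass v (fun c => a <= c <= b) (compact_P3 a b) vab.
have near : forall eps, 0 < eps -> forall N, exists p, (N <= p)%coq_nat /\ Rabs (v p - L) < eps.
  move=> eps eps0 N.
  by apply: (HL (disc L (mkposreal eps eps0))); exists (mkposreal eps eps0).
exists L; split.
  split; apply: Rnot_lt_le => H.
    have [p [_]] := near (a - L) ltac:(lra) 0%nat.
    by have := vab p; rewrite /Rabs; case: Rcase_abs; lra.
  have [p [_]] := near (L - b) ltac:(lra) 0%nat.
  by have := vab p; rewrite /Rabs; case: Rcase_abs; lra.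
move=> eps eps0 N; have [p [Np Hp]] := near eps eps0 N.
by exists (p + n0 + 1)%nat; split; [|split]; [lia | lia | ].
Qed.

(* The statement is about Peano's [le], which ssrnat's [<=] would otherwise denote. *)
Local Notation "m <= n" := (Peano.le m n) : nat_scope.

Theorem corollary2 :
  exists m : nat -> R,
    (forall d : nat, (1 <= d)%nat -> is_m d (m d)) /\
    exists L : R, 1 <= L <= 2 /\ accumulation_point (fun d => m d ^ d) L.
Proof.
pose m d := epsilon (inhabits R0) (is_m d).
have m_spec : forall d, (0 < d)%N -> is_m d (m d).
  move=> d d_gt0; have [x mx] := is_m_exists d_gt0.
  by apply: (epsilon_spec (inhabits R0) (is_m d)); exists x.
exists m; split; first by move=> d d1; apply: m_spec; apply/ssrnat.leP.
apply: (accumulation_point_in_interval (n0 := 2)) => d d_gt1.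
exact: is_m_bounds d_gt1 (m_spec d (ltnW d_gt1)).
Qed.
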